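(* Consider a two-player matrix game between a player $\mathrm{SV}$ (the group of surrounding vehicles) and a player $\mathrm{EV}$ (the ego vehicle). Player $\mathrm{SV}$ has exactly two actions $\pi_{\mathrm{SV}}^1$ (``Assert'') and $\pi_{\mathrm{SV}}^2$ (``Yield''); player $\mathrm{EV}$ has finitely many actions $\pi_{\mathrm{EV}}^1,\dots,\pi_{\mathrm{EV}}^{M_{\mathrm{EV}}}$. For each $i\in\{1,2\}$ and $m\in\{1,\dots,M_{\mathrm{EV}}\}$ let $J_{\mathrm{SV}}^{im}$ and $J_{\mathrm{EV}}^{im}$ be real numbers (the costs of $\mathrm{SV}$ and $\mathrm{EV}$ under the action tuple $(\pi_{\mathrm{SV}}^i,\pi_{\mathrm{EV}}^m)$). Let $b(\pi_{\mathrm{SV}}^1), b(\pi_{\mathrm{SV}}^2)\in[0,1]$ with $b(\pi_{\mathrm{SV}}^1)+b(\pi_{\mathrm{SV}}^2)=1$, and define the modified cost of $\mathrm{SV}$ by $\bar J_{\mathrm{SV}}^{im}:=(1-b(\pi_{\mathrm{SV}}^i))J_{\mathrm{SV}}^{im}$; the cost of $\mathrm{EV}$ is $J_{\mathrm{EV}}^{im}$. Assume that the inequalities $0\le J_{\mathrm{SV}}^{1m}\le J_{\mathrm{SV}}^{2m}$ and $J_{\mathrm{EV}}^{1m}\ge J_{\mathrm{EV}}^{2m}\ge 0$ hold for all $m\in\{1,\dots,M_{\mathrm{EV}}\}$ (for all feasible action tuples). If for some $p\in\{1,\dots,M_{\mathrm{EV}}\}$ the action tuple $(\pi_{\mathrm{SV}}^2,\pi_{\mathrm{EV}}^p)$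 is a pure-strategy Nash equilibrium, then it is also a Stackelberg equilibrium with $\mathrm{EV}$ as the leader (and $\mathrm{SV}$ as the follower).
   Context: An action tuple is called feasible if the corresponding simulated multi-vehicle trajectories are collision-free; it is assumed that at least one feasible action tuple exists. A pure-strategy Nash equilibrium is an action tuple from which no player can lower its own cost (modified cost $\bar J_{\mathrm{SV}}$ for $\mathrm{SV}$, $J_{\mathrm{EV}}$ for $\mathrm{EV}$) by unilaterally changing its action. A Stackelberg equilibrium with leader $\mathrm{L}$ and follower $\mathrm{F}$ is a pair $\{\pi_{\mathrm{L}}^*,\pi_{\mathrm{F}}^*(\cdot)\}$ such that $\pi_{\mathrm{F}}^*(\pi_{\mathrm{L}})\in\arg\min_{\pi_{\mathrm{F}}}J_{\mathrm{F}}(\pi_{\mathrm{L}},\pi_{\mathrm{F}})$ for every leader action $\pi_{\mathrm{L}}$ and $\pi_{\mathrm{L}}^*\in\arg\min_{\pi_{\mathrm{L}}}J_{\mathrm{L}}(\pi_{\mathrm{L}},\pi_{\mathrm{F}}^*(\pi_{\mathrm{L}}))$; here the leader is $\mathrm{EV}$ with cost $J_{\mathrm{EV}}$ and the follower is $\mathrm{SV}$ with cost $\bar J_{\mathrm{SV}}$, and the action tuple is $(\pi_{\mathrm{F}}^*(\pi_{\mathrm{L}}^* ),\pi_{\mathrm{L}}^* )$. The number $b(\pi_{\mathrm{SV}}^i)$ is the belief that the surrounding vehicles take action $\pi_{\mathrm{SV}}^i$. *)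

From mathcomp Require Import all_boot all_order all_algebra.
Set Implicit Arguments. Unset Strict Implicit. Unset Printing Implicit Defensive.
Import Order.TTheory GRing.Theory Num.Theory.
Local Open Scope ring_scope.

Definition Assert : 'I_2 := ord0.
Definition Yield  : 'I_2 := ord_max.

Definition modified_cost (R : pzRingType) (M : nat) (b : 'I_2 -> R)
  (JSV : 'I_2 -> 'I_M -> R) : 'I_2 -> 'I_M -> R :=
  fun i m => (1 - b i) * JSV i m.

Definition pure_Nash (R : numDomainType) (M : nat)
  (JSV' JEV : 'I_2 -> 'I_M -> R) (i : 'I_2) (m : 'I_M) : Prop :=
  (forall i', JSV' i m <= JSV' i' m) /\ (forall m', JEV i m <= JEV i m').

Definition Stackelberg_pair (R : numDomainType) (M : nat)
  (JSV' JEV : 'I_2 -> 'I_M -> R) (piL : 'I_M) (piF : 'I_M -> 'I_2) : Prop :=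
  (forall mL i', JSV' (piF mL) mL <= JSV' i' mL) /\
  (forall mL, JEV (piF piL) piL <= JEV (piF mL) mL).

Definition Stackelberg_tuple (R : numDomainType) (M : nat)
  (JSV' JEV : 'I_2 -> 'I_M -> R) (i : 'I_2) (m : 'I_M) : Prop :=
  exists piF : 'I_M -> 'I_2, Stackelberg_pair JSV' JEV m piF /\ piF m = i.

From mathcomp Require Import all_boot all_order all_algebra.
Import Order.TTheory GRing.Theory Num.Theory.
Set Implicit Arguments. Unset Strict Implicit.
Local Open Scope ring_scope.

(* Let SV follow by best response, breaking ties in favour of Yield.  The Nash
   condition says Yield is a best response to p, so this follower answers p
   with Yield, and that EV's cost at (Yield, p) is at most its cost at
   (Yield, m) for every m.  Since EV never pays more against Yield than against
   Assert, the latter is at most its cost at (best response to m, m): leading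
   with p is optimal.  Only the inequality JEV Yield <= JEV Assert is used. *)

Lemma ord2P (i : 'I_2) : i = Assert \/ i = Yield.
Proof. by case: i => [[|[|//]] ?]; [left | right]; apply: val_inj. Qed.

Section BestResponse.

Variables (R : realDomainType) (M : nat) (C : 'I_2 -> 'I_M -> R).

Definition best_response (m : 'I_M) : 'I_2 :=
  if C Yield m <= C Assert m then Yield else Assert.

Lemma best_response_min m i : C (best_response m) m <= C i m.
Proof.
rewrite /best_response; case: ifPn => [YA | /negbTE AY].
  by case: (ord2P i) => ->.
have AY' : C Assert m <= C Yield m by rewrite ltW // ltNge AY.
by case: (ord2P i) => ->.
Qed.

Lemma best_response_Yield m : C Yield m <= C Assert m -> best_response m = Yield.
Proof. by rewrite /best_response => ->. Qed.

End BestResponse.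

Lemma Nash_Yield_Stackelberg (R : realDomainType) (M : nat)
  (JSV' JEV : 'I_2 -> 'I_M -> R) (p : 'I_M) :
  (forall m, JEV Yield m <= JEV Assert m) ->
  pure_Nash JSV' JEV Yield p -> Stackelberg_tuple JSV' JEV Yield p.
Proof.
move=> JEV_YA [SV_opt EV_opt].
have brp : best_response JSV' p = Yield by apply/best_response_Yield/SV_opt.
exists (best_response JSV'); split=> //; split; first exact: best_response_min.
move=> m; rewrite brp; apply: le_trans (EV_opt m) _.
by rewrite /best_response; case: ifP.
Qed.

Theorem proposition2 (R : realFieldType) (M : nat)
  (JSV JEV : 'I_2 -> 'I_M -> R) (b : 'I_2 -> R)
  (hb0 : forall i, 0 <= b i) (hb1 : forall i, b i <= 1)
  (hbsum : b Assert + b Yield = 1)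
  (hSV : forall m, 0 <= JSV Assert m /\ JSV Assert m <= JSV Yield m)
  (hEV : forall m, JEV Assert m >= JEV Yield m /\ JEV Yield m >= 0)
  (p : 'I_M)
  (hNE : pure_Nash (modified_cost b JSV) JEV Yield p) :
  Stackelberg_tuple (modified_cost b JSV) JEV Yield p.
Proof.
apply: Nash_Yield_Stackelberg hNE => m.
exact: (proj1 (hEV m)).
Qed.
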